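(* Under the hypotheses of Theorem 2 (i.e. $\alpha_x,\alpha_y,\alpha_z>1$, $\alpha=\gcd(\alpha_x,\alpha_y,\alpha_z)$, $\beta_y=\alpha_y/\alpha$ odd), for each $i\in\{0,1,2,3\}$ the half-plane operators $X|_{\mathcal D_x^{g_i}}$ and $Z|_{\mathcal D_z^{g_i}}$ commute with every stabilizer generator $S_s$, and, up to multiplication by an element of the stabilizer group $\mathcal S$, $$X|_{\mathcal D_x^{g_i}}=\prod_{j=0}^{\alpha-1}X_{Li}^j,\qquad Z|_{\mathcal D_z^{g_i}}=\prod_{j=0}^{\alpha-1}Z_{Li}^j.$$
   Context: Chamon model: for positive integers $\alpha_x,\alpha_y,\alpha_z$ let $\mathcal A=\mathbb Z_{2\alpha_x}\times\mathbb Z_{2\alpha_y}\times\mathbb Z_{2\alpha_z}$ and $\mathcal D=\{(x,y,z)\in\mathcal A: x+y+z \text{ even}\}$, one qubit per point of $\mathcal D$. With $e_x^{\pm}=(\pm1,0,0)$, $e_y^{\pm}=(0,\pm1,0)$, $e_z^{\pm}=(0,0,\pm1)$, for $s\in\mathcal A\setminus\mathcal D$ the stabilizer generator is $S_s=X_{s+e_x^+}X_{s+e_x^-}Y_{s+e_y^+}Y_{s+e_y^-}Z_{s+e_z^+}Z_{s+e_z^-}$ (single-qubit Paulis, $Y=ZX$); $\mathcal S$ is the group they generate. For $\mathcal D'\subseteq\mathcal D$, $X|_{\mathcal D'}=\prod_{d\in\mathcal D'}X_d$, $Z|_{\mathcal D'}=\prod_{d\in\mathcal D'}Z_d$. Let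 $g_0=(0,0,0)$, $g_1=(1,1,0)$, $g_2=(1,0,1)$, $g_3=(0,1,1)$; half-plane sets $\mathcal D_x^{g_i}=\{g_i+2\lambda e_z^{+}+2\lambda' e_y^{+}:\lambda,\lambda'\in\mathbb Z\}$, $\mathcal D_z^{g_i}=\{g_i+2\lambda e_x^{+}+2\lambda' e_y^{+}:\lambda,\lambda'\in\mathbb Z\}$. Write $\alpha_x=\beta_x\alpha,\alpha_y=\beta_y\alpha,\alpha_z=\beta_z\alpha$; $g_{i,j}=g_i+2je_y^{+}$, $\mu_i=(-1)^{\lfloor i/2\rfloor}$, $\nu_i=(-1)^{\lceil i/2\rceil\bmod 2}$; $\mathcal G_{i,j}^x=\{g_{i,j}+2\lambda\alpha e_y^{+}+2\lambda'\alpha e_z^{+}:0\le\lambda<\beta_y,0\le\lambda'<\beta_z\}$, $\mathcal G_{i,j}^z=\{g_{i,j}+2\lambda\alpha e_y^{+}+2\lambda'\alpha e_x^{+}:0\le\lambda<\beta_y,0\le\lambda'<\beta_x\}$, $\mathcal D_x^{i,j}=\{g+\lambda(\mu_i e_z^{+}+e_y^{+})+\lambda'(\mu_i e_z^{+}+e_y^{-}):0\le\lambda,\lambda'<\alpha,\ g\in\mathcal G_{i,j}^x\}$, $\mathcal D_z^{i,j}=\{g+\lambda(\nu_i e_x^{+}+e_y^{+})+\lambda'(\nu_i e_x^{+}+e_y^{-}):0\le\lambda,\lambda'<\alpha,\ g\in\mathcal G_{i,j}^z\}$; $X_{Li}^j=X|_{\mathcal D_x^{i,j}}$, $Z_{Li}^j=Z|_{\mathcal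 D_z^{i,j}}$ (coordinates modulo $2\alpha_x,2\alpha_y,2\alpha_z$). *)

From mathcomp Require Import all_boot all_algebra.
From mathcomp Require Import boolp.
Set Implicit Arguments. Unset Strict Implicit. Unset Printing Implicit Defensive.
Import GRing.Theory Num.Theory.
Local Open Scope ring_scope.

(* Pauli operators (with real sign) on qubits indexed by a finite type T:
   the operator (-1)^sgn * Z^zp * X^xp, where Z^a = prod_{t, a t} Z_t. *)
Record pauli (T : finType) := Pauli { psgn : bool; pz : {ffun T -> bool}; px : {ffun T -> bool} }.

Definition dotb (T : finType) (a b : {ffun T -> bool}) : bool :=
  odd #|[set t | a t && b t]|.

(* (Z^a X^b)(Z^c X^d) = (-1)^(b.c) Z^(a+c) X^(b+d) *)
Definition pmul (T : finType) (P Q : pauli T) : pauli T :=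
  Pauli (psgn P (+) psgn Q (+) dotb (px P) (pz Q))
        [ffun t => pz P t (+) pz Q t] [ffun t => px P t (+) px Q t].

Definition pid (T : finType) : pauli T := Pauli false [ffun _ => false] [ffun _ => false].

Definition pprod (T : finType) (l : seq (pauli T)) : pauli T := foldr (@pmul T) (pid T) l.

Definition X_on (T : finType) (D' : T -> Prop) : pauli T :=
  Pauli false [ffun _ => false] [ffun t => `[< D' t >]].
Definition Z_on (T : finType) (D' : T -> Prop) : pauli T :=
  Pauli false [ffun t => `[< D' t >]] [ffun _ => false].

Definition Alat (ax ay az : nat) : finType :=
  ('I_(2 * ax)%N * 'I_(2 * ay)%N * 'I_(2 * az)%N)%type.

Definition inD ax ay az (a : Alat ax ay az) : bool :=
  ~~ odd (a.1.1 + a.1.2 + a.2)%N.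

(* qubits: the points of D *)
Definition site ax ay az : finType := {a : Alat ax ay az | inD a}.

Definition ipt := (int * int * int)%type.

Definition at_pt ax ay az (p : ipt) (a : Alat ax ay az) : Prop :=
  [/\ (p.1.1 %% (2 * ax)%N%:Z)%Z = (a.1.1 : nat)%:Z,
      (p.1.2 %% (2 * ay)%N%:Z)%Z = (a.1.2 : nat)%:Z &
      (p.2 %% (2 * az)%N%:Z)%Z = (a.2 : nat)%:Z].

Definition site_at ax ay az (p : ipt) (q : site ax ay az) : Prop := at_pt p (val q).

Definition padd (p d : ipt) : ipt := (p.1.1 + d.1.1, p.1.2 + d.1.2, p.2 + d.2).
Definition pscale (k : int) (d : ipt) : ipt := (k * d.1.1, k * d.1.2, k * d.2).

Definition ex : ipt := (1, 0, 0).
Definition ey : ipt := (0, 1, 0).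
Definition ez : ipt := (0, 0, 1).

Definition emx : ipt := pscale (-1) ex.
Definition emy : ipt := pscale (-1) ey.
Definition emz : ipt := pscale (-1) ez.

Definition ptA ax ay az (a : Alat ax ay az) : ipt :=
  ((a.1.1 : nat)%:Z, (a.1.2 : nat)%:Z, (a.2 : nat)%:Z).

(* Pauli acting on the qubit at integer point p (reduced mod the lattice);
   the single-qubit operator is applied on every qubit located at p (there is exactly one
   whenever p has even coordinate sum). *)
Definition X_at ax ay az (p : ipt) : pauli (site ax ay az) := X_on (site_at p).
Definition Z_at ax ay az (p : ipt) : pauli (site ax ay az) := Z_on (site_at p).
Arguments X_at {ax ay az}.
Arguments Z_at {ax ay az}.
Definition Y_at ax ay az (p : ipt) : pauli (site ax ay az) := pmul (Z_at p) (X_at p).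
Arguments Y_at {ax ay az}.

Definition Sgen ax ay az (s : Alat ax ay az) : pauli (site ax ay az) :=
  let p := ptA s in
  pprod [:: X_at (padd p ex); X_at (padd p emx);
            Y_at (padd p ey); Y_at (padd p emy);
            Z_at (padd p ez); Z_at (padd p emz)].

Inductive in_stab ax ay az : pauli (site ax ay az) -> Prop :=
| stab_id : in_stab (pid _)
| stab_gen : forall s : Alat ax ay az, ~~ inD s -> in_stab (Sgen s)
| stab_mul : forall P Q, in_stab P -> in_stab Q -> in_stab (pmul P Q).

Definition pcommute (T : finType) (P Q : pauli T) : Prop := pmul P Q = pmul Q P.

Definition gpt (i : nat) : ipt :=
  match i with
  | 0 => (0, 0, 0)
  | 1 => (1, 1, 0)
  | 2 => (1, 0, 1)
  | _ => (0, 1, 1)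
  end.


Definition Dx_half ax ay az (g : ipt) (q : site ax ay az) : Prop :=
  exists l l' : int, site_at (padd (padd g (pscale (2 * l) ez)) (pscale (2 * l') ey)) q.
Definition Dz_half ax ay az (g : ipt) (q : site ax ay az) : Prop :=
  exists l l' : int, site_at (padd (padd g (pscale (2 * l) ex)) (pscale (2 * l') ey)) q.

Definition alph (ax ay az : nat) : nat := gcdn ax (gcdn ay az).
Definition betax ax ay az : nat := (ax %/ alph ax ay az)%N.
Definition betay ax ay az : nat := (ay %/ alph ax ay az)%N.
Definition betaz ax ay az : nat := (az %/ alph ax ay az)%N.

Definition mu (i : nat) : int := (-1) ^+ (i./2).
Definition nu (i : nat) : int := (-1) ^+ ((uphalf i) %% 2).

Definition gij (i j : nat) : ipt := padd (gpt i) (pscale (2 * j%:Z) ey).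

Definition DxL ax ay az (i j : nat) (q : site ax ay az) : Prop :=
  let a := alph ax ay az in
  exists l1 l2 l l' : nat,
    [/\ (l1 < betay ax ay az)%N, (l2 < betaz ax ay az)%N, (l < a)%N, (l' < a)%N &
    site_at
      (padd (padd (padd (padd (gij i j) (pscale (2 * l1%:Z * a%:Z) ey))
                              (pscale (2 * l2%:Z * a%:Z) ez))
                        (pscale l%:Z (padd (pscale (mu i) ez) ey)))
                  (pscale l'%:Z (padd (pscale (mu i) ez) emy))) q].

Definition DzL ax ay az (i j : nat) (q : site ax ay az) : Prop :=
  let a := alph ax ay az in
  exists l1 l2 l l' : nat,
    [/\ (l1 < betay ax ay az)%N, (l2 < betax ax ay az)%N, (l < a)%N, (l' < a)%N &
    site_at
      (padd (padd (padd (padd (gij i j) (pscale (2 * l1%:Z * a%:Z) ey))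
                              (pscale (2 * l2%:Z * a%:Z) ex))
                        (pscale l%:Z (padd (pscale (nu i) ex) ey)))
                  (pscale l'%:Z (padd (pscale (nu i) ex) emy))) q].

Definition XL ax ay az (i j : nat) : pauli (site ax ay az) := X_on (@DxL ax ay az i j).
Definition ZL ax ay az (i j : nat) : pauli (site ax ay az) := Z_on (@DzL ax ay az i j).

From mathcomp Require Import all_boot all_algebra.
From mathcomp Require Import boolp.
From mathcomp Require Import zify.
Set Implicit Arguments. Unset Strict Implicit.
Import GRing.Theory Num.Theory.
Local Open Scope ring_scope.

(* All sets involved are cut out by congruences on the integer coordinates
   of the qubits, so everything reduces to arithmetic modulo the lattice
   periods (2 ax, 2 ay, 2 az) and modulo 2:
   - D_x^g is the set of qubits congruent to g modulo (2 ax, 2, 2).  The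
     Z-part of a stabilizer S_s sits on s +- e_y and s +- e_z; the two
     points of each pair are congruent modulo (2 ax, 2, 2), so they meet
     D_x^g together and X|_{D_x^g} commutes with S_s.  Dually for Z.
   - A qubit lies in D_x^{i,j} iff its x-coordinate is that of g_i and its
     offsets (Y, W) from g_i along e_y, e_z satisfy a diagonal condition
     modulo 2 alpha.  A reflection j |-> c - j (mod alpha) turns the number
     of j's satisfying it into the number of splittings V = l + l' with
     l, l' < alpha of the residue V of +-W, which is odd iff V is even.
     Hence each qubit of D_x^{g_i} is covered an odd number of times and
     every other qubit an even number of times, and the product of the
     X_{Li}^j is X|_{D_x^{g_i}} exactly: the stabilizer factor is 1. *)

Definition modeq (M x y : int) : Prop := exists k : int, x - y = k * M.

Lemma modeq2_nat (n : nat) : modeq 2 n 0 <-> ~~ odd n.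
Proof.
have E := odd_double_half n; split.
  by case=> k Hk; apply/negP => On; rewrite On -muln2 in E; lia.
by move=> On; rewrite (negbTE On) -muln2 in E; exists (n./2)%:Z; lia.
Qed.

Lemma modeq_small (M r r' : int) :
  0 <= r < M -> 0 <= r' < M -> modeq M r r' -> r = r'.
Proof.
move=> rM r'M [k Hk].
have [k0|[k1|k1]] : k = 0 \/ 1 <= k \/ k <= -1 by lia.
- by move: Hk; rewrite k0 mul0r; lia.
- have : M <= k * M by nia.
  lia.
- have : k * M <= - M by nia.
  lia.
Qed.

Lemma residue_exists (M : nat) (x : int) :
  (0 < M)%N -> exists2 r : nat, (r < M)%N & modeq M x r.
Proof.
move=> M0; have D := divz_eq x M.
have B : 0 <= (x %% M)%Z < M by rewrite modz_ge0 ?ltz_pmod //; lia.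
by exists (absz (x %% M)%Z); [lia | exists (x %/ M)%Z; lia].
Qed.

Lemma modzP (M x : int) (n : nat) :
  0 < M -> n%:Z < M -> ((x %% M)%Z = n%:Z <-> modeq M x n).
Proof.
move=> M0 nM; have D := divz_eq x M; have B : 0 <= (x %% M)%Z < M by nia.
split=> [H | [k Hk]]; first by exists (x %/ M)%Z; lia.
apply: (@modeq_small M); [exact: B | lia | exists (k - (x %/ M)%Z); lia].
Qed.

Lemma modeq_sym (M x y : int) : modeq M x y -> modeq M y x.
Proof. by case=> k Hk; exists (- k); lia. Qed.

Lemma modeq_trans (M x y z : int) : modeq M x y -> modeq M y z -> modeq M x z.
Proof. by case=> k Hk [k' Hk']; exists (k + k'); lia. Qed.

Lemma modeq_dvd (M N : nat) (x y : int) : (M %| N)%N -> modeq N x y -> modeq M x y.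
Proof. by case/dvdnP=> d -> [k Hk]; exists (k * d%:Z); lia. Qed.

Lemma modeq_coarsen (a b : nat) (Y c : int) : (0 < b)%N ->
  (exists2 l : nat, (l < b)%N & modeq (2 * (a * b))%N Y (c + 2 * l%:Z * a%:Z))
  <-> modeq (2 * a%:Z) Y c.
Proof.
move=> b0; split; first by case=> l _ [k Hk]; exists (k * b%:Z + l%:Z); lia.
case=> k Hk; have [l lb [q Hq]] := residue_exists k b0.
by exists l => //; exists q; nia.
Qed.

Definition refl_mod (a c j : nat) : nat :=
  if (j <= c)%N then (c - j)%N else (c + a - j)%N.

Lemma refl_mod_lt (a c j : nat) : (c < a)%N -> (j < a)%N -> (refl_mod a c j < a)%N.
Proof. by rewrite /refl_mod; case: ifP; lia. Qed.

Lemma refl_modP (a c j l : nat) : (c < a)%N -> (j < a)%N -> (l < a)%N ->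
  modeq a (j + l)%N c <-> l = refl_mod a c j.
Proof.
move=> ca ja la; rewrite /refl_mod; split.
  case=> k Hk; have [k0|k1] : k = 0 \/ k = 1 by nia.
  - by move: Hk; rewrite k0; case: ifP => H; lia.
  - by move: Hk; rewrite k1; case: ifP => H; lia.
by case: ifP => H ->; [exists 0 | exists 1]; lia.
Qed.

Lemma refl_modK (a c j : nat) : (c < a)%N -> (j < a)%N ->
  refl_mod a c (refl_mod a c j) = j.
Proof.
move=> ca ja; have la := refl_mod_lt ca ja.
apply/esym/(refl_modP ca la ja); have := refl_modP ca ja la.
by case=> _ /(_ erefl) [k Hk]; exists k; lia.
Qed.

Lemma perm_refl_mod (a c : nat) : (c < a)%N ->
  perm_eq (map (refl_mod a c) (iota 0 a)) (iota 0 a).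
Proof.
move=> ca; apply: uniq_perm; last 1 first.
- move=> x; apply/mapP/idP.
  + by case=> j; rewrite !mem_iota !add0n => ja ->; apply: refl_mod_lt.
  + rewrite mem_iota add0n => xa; exists (refl_mod a c x); last by rewrite refl_modK.
    by rewrite mem_iota add0n refl_mod_lt.
- rewrite map_inj_in_uniq ?iota_uniq // => x y; rewrite !mem_iota !add0n => xa ya E.
  by rewrite -(refl_modK ca xa) E refl_modK.
- exact: iota_uniq.
Qed.

(* [window a V l] : l <= V < l + a, i.e. V splits as l + l' with l, l' < a
   (when l < a). *)
Definition window (a V l : nat) : bool := (l <= V)%N && (V < l + a)%N.

Lemma count_interval (lo hi n : nat) : (lo <= hi)%N ->
  count (fun l => (lo <= l)%N && (l < hi)%N) (iota 0 n) = (minn hi n - minn lo n)%N.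
Proof.
move=> lh; elim: n => [|n IH]; first by rewrite /= !minn0.
rewrite -addn1 iotaD count_cat IH /= add0n.
by case: (lo <= n)%N /idP; case: (n < hi)%N /idP => /=; lia.
Qed.

Lemma odd_count_window (a V : nat) : (V < 2 * a)%N ->
  odd (count (window a V) (iota 0 a)) = ~~ odd V.
Proof.
move=> Va.
have -> : count (window a V) (iota 0 a) =
          count (fun l => (V.+1 - a <= l)%N && (l < V.+1)%N) (iota 0 a).
  by apply: eq_count => l; rewrite /window; apply/idP/idP => /andP [H1 H2]; apply/andP; lia.
rewrite count_interval; last by lia.
have [->|E] : (minn V.+1 a - minn (V.+1 - a) a = V.+1 \/
               minn V.+1 a - minn (V.+1 - a) a + V.+1 = 2 * a)%N by lia.
  by [].
by move/(congr1 odd): E; rewrite oddD /= mul2n odd_double; case: (odd _); case: (odd V).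
Qed.

Lemma sum_residue (a V l l' : nat) (m W : int) : m = 1 \/ m = -1 ->
  (V < 2 * a)%N -> modeq (2 * a)%N (m * W) V -> (l < a)%N -> (l' < a)%N ->
  modeq (2 * a%:Z) W (m * (l + l')%N%:Z) <-> (l + l')%N = V.
Proof.
move=> hm Va [k Hk] la l'a; split => [[k' Hk'] | Hs].
  apply/eqP; rewrite -eqz_nat; apply/eqP.
  apply: (@modeq_small (2 * a)%N); try lia.
  by exists (k - m * k'); case: hm => ?; subst m; lia.
by exists (m * k); rewrite -Hs in Hk; case: hm => ?; subst m; lia.
Qed.

Lemma diff_residue (a j l l' : nat) (Y h : int) : Y + (l + l')%N%:Z = 2 * h ->
  modeq (2 * a%:Z) Y (2 * j%:Z + (l%:Z - l'%:Z)) <-> modeq a (j + l)%N h.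
Proof. by move=> Hh; split=> -[k Hk]; exists (- k); lia. Qed.

(* The diagonal condition: site offsets (Y, W) lie on the j-th family of
   anti-diagonals l (m e_w + e_y) + l' (m e_w - e_y), 0 <= l, l' < a. *)
Definition diag_cond (a : nat) (m Y W : int) (j : nat) : Prop :=
  exists l l' : nat, [/\ (l < a)%N, (l' < a)%N,
    modeq (2 * a%:Z) Y (2 * j%:Z + (l%:Z - l'%:Z)) &
    modeq (2 * a%:Z) W (m * (l + l')%N%:Z)].

Lemma diag_cond_window (a : nat) (m Y W : int) : (0 < a)%N ->
  m = 1 \/ m = -1 -> modeq 2 (Y + W) 0 ->
  exists V c : nat, [/\ (V < 2 * a)%N, (c < a)%N, (modeq 2 W 0 <-> ~~ odd V) &
    forall j, (j < a)%N -> diag_cond a m Y W j <-> window a V (refl_mod a c j)].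
Proof.
move=> a0 hm [e He].
have a2 : (0 < 2 * a)%N by lia.
have [V Va [q Hq]] := residue_exists (m * W) a2.
have [h Hh] : exists h, Y + V%:Z = 2 * h.
  by case: hm => ?; subst m; [exists (e - a%:Z * q); lia | exists (e - W - a%:Z * q); lia].
have [c ca [r Hr]] := residue_exists h a0.
exists V, c; split => //.
  rewrite -modeq2_nat; split=> -[k Hk].
  - by exists (m * k - q * a%:Z); case: hm => ?; subst m; lia.
  - by exists (m * (k + q * a%:Z)); case: hm => ?; subst m; lia.
move=> j ja; have hsum := @sum_residue a V _ _ m W hm Va (ex_intro _ q Hq).
split.
- case=> l [l' [la l'a /diff_residue HY /hsum HW]]; have {}HW := HW la l'a.
  rewrite HW in HY; have [k Hk] := HY _ Hh.
  have -> : refl_mod a c j = l.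
    by apply/esym/refl_modP => //; exists (k + r); lia.
  by rewrite /window -HW; lia.
- rewrite /window => /andP [lV Vl]; set l := refl_mod a c j.
  have la : (l < a)%N by exact: refl_mod_lt.
  exists l, (V - l)%N; split => //; first lia.
  + apply/(@diff_residue a j l (V - l)%N Y h); first by rewrite subnKC.
    have /refl_modP := erefl l; move=> /(_ ca ja la) [k Hk]; exists (k - r); lia.
  + by apply/hsum; [lia | lia | rewrite subnKC].
Qed.

(* The strip condition of the logical operators, written in offsets from the
   corner g_i: Y along e_y, W along the transverse axis e_w, m = +-1 the
   orientation of the diagonals, b1 and bw the numbers of repetitions of the
   pattern (period 2a) along e_y and e_w. *)
Definition strip_cond (a b1 bw : nat) (m Y W : int) (j : nat) : Prop :=
  exists l1 l2 l l' : nat, [/\ (l1 < b1)%N, (l2 < bw)%N, (l < a)%N, (l' < a)%N &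
    modeq (2 * (a * b1))%N Y (2 * j%:Z + (l%:Z - l'%:Z) + 2 * l1%:Z * a%:Z) /\
    modeq (2 * (a * bw))%N W (m * (l + l')%N%:Z + 2 * l2%:Z * a%:Z)].

(* The repetitions of the pattern are invisible modulo 2a. *)
Lemma strip_condE (a b1 bw : nat) (m Y W : int) (j : nat) :
  (0 < b1)%N -> (0 < bw)%N -> strip_cond a b1 bw m Y W j <-> diag_cond a m Y W j.
Proof.
move=> b0 w0; split.
- case=> l1 [l2 [l [l' [h1 h2 la l'a [HY HW]]]]]; exists l, l'; split => //.
  + by apply/(modeq_coarsen _ _ _ b0); exists l1.
  + by apply/(modeq_coarsen _ _ _ w0); exists l2.
- case=> l [l' [la l'a /(modeq_coarsen _ _ _ b0) [l1 h1 HY]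
                      /(modeq_coarsen _ _ _ w0) [l2 h2 HW]]].
  by exists l1, l2, l, l'.
Qed.

Lemma odd_count_strip (a b1 bw : nat) (m Y W : int) :
  (0 < a)%N -> (0 < b1)%N -> (0 < bw)%N -> m = 1 \/ m = -1 -> modeq 2 (Y + W) 0 ->
  odd (count (fun j => `[< strip_cond a b1 bw m Y W j >]) (iota 0 a))
  <-> modeq 2 Y 0 /\ modeq 2 W 0.
Proof.
move=> a0 b0 w0 hm hYW.
have [V [c [Va ca HW HP]]] := diag_cond_window a0 hm hYW.
have -> : count (fun j => `[< strip_cond a b1 bw m Y W j >]) (iota 0 a) =
          count (window a V \o refl_mod a c) (iota 0 a).
  apply: eq_in_count => j; rewrite mem_iota add0n => ja /=.
  by apply: (asbool_equiv_eqP idP); rewrite -HP // strip_condE.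
rewrite -count_map (permP (perm_refl_mod ca)) odd_count_window //.
apply: iff_trans (iff_sym HW) _; case: hYW => k Hk.
split=> [[k' Hk'] | [_ //]].
by split; [exists (k - k') | exists k']; lia.
Qed.

Section PauliAlgebra.
Variable T : finType.

Lemma dotb0 (a : {ffun T -> bool}) : dotb a [ffun _ => false] = false.
Proof.
rewrite /dotb (_ : [set t | a t && [ffun _ => false] t] = set0) ?cards0 //.
by apply/setP => t; rewrite !inE ffunE andbF.
Qed.

Lemma dotbC (a b : {ffun T -> bool}) : dotb a b = dotb b a.
Proof.
by rewrite /dotb (_ : [set t | a t && b t] = [set t | b t && a t]) //;
   apply/setP => t; rewrite !inE andbC.
Qed.

Lemma dotbD (a b c : {ffun T -> bool}) :
  dotb a [ffun t => b t (+) c t] = dotb a b (+) dotb a c.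
Proof.
rewrite /dotb; set B := [set t | a t && b t]; set C := [set t | a t && c t].
have -> : [set t | a t && [ffun t => b t (+) c t] t] = (B :|: C) :\: (B :&: C).
  by apply/setP => t; rewrite !inE ffunE; case: (a t); case: (b t); case: (c t).
have E1 := cardsUI B C; have E2 := cardsID (B :&: C) (B :|: C).
rewrite (setIidPr (subset_trans (subsetIl B C) (subsetUl B C))) in E2.
have E : (#|B| + #|C| = #|(B :|: C) :\: (B :&: C)| + (#|B :&: C|).*2)%N.
  by rewrite -E1 -E2 -addnn; lia.
by rewrite -oddD E oddD odd_double addbF.
Qed.

Lemma pmul_pid (P : pauli T) : pmul P (pid T) = P.
Proof.
case: P => s z x; rewrite /pmul /pid /= dotb0 !addbF.
by congr Pauli; apply/ffunP => t; rewrite !ffunE addbF.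
Qed.

Lemma X_on_ext (D D' : T -> Prop) : (forall t, D t <-> D' t) -> X_on D = X_on D'.
Proof.
by move=> DD'; congr Pauli; apply/ffunP => t; rewrite !ffunE (asbool_equiv_eq (DD' t)).
Qed.

Lemma Z_on_ext (D D' : T -> Prop) : (forall t, D t <-> D' t) -> Z_on D = Z_on D'.
Proof.
by move=> DD'; congr Pauli; apply/ffunP => t; rewrite !ffunE (asbool_equiv_eq (DD' t)).
Qed.

Lemma pprod_X_on (I : Type) (D : I -> T -> Prop) (s : seq I) :
  pprod [seq X_on (D j) | j <- s] = X_on (fun t => odd (count (fun j => `[< D j t >]) s)).
Proof.
elim: s => [|j s IH] /=.
  by rewrite /pid /X_on; congr Pauli; apply/ffunP => t; rewrite !ffunE asboolF.
rewrite IH /pmul /= dotb0; congr Pauli; apply/ffunP => t; rewrite !ffunE //.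
by rewrite !asboolb oddD; case: `[< D j t >].
Qed.

Lemma pprod_Z_on (I : Type) (D : I -> T -> Prop) (s : seq I) :
  pprod [seq Z_on (D j) | j <- s] = Z_on (fun t => odd (count (fun j => `[< D j t >]) s)).
Proof.
elim: s => [|j s IH] /=.
  by rewrite /pid /Z_on; congr Pauli; apply/ffunP => t; rewrite !ffunE asboolF.
rewrite IH /pmul /= dotbC dotb0; congr Pauli; apply/ffunP => t; rewrite !ffunE //.
by rewrite !asboolb oddD; case: `[< D j t >].
Qed.

Lemma X_on_commute (D : T -> Prop) (S : pauli T) :
  dotb [ffun t => `[< D t >]] (pz S) = false -> pcommute (X_on D) S.
Proof.
case: S => s z x /= H; rewrite /pcommute /pmul /= H dotb0 /=.
by congr Pauli; rewrite ?addbF //; apply/ffunP => t; rewrite !ffunE addbC.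
Qed.

Lemma Z_on_commute (D : T -> Prop) (S : pauli T) :
  dotb (px S) [ffun t => `[< D t >]] = false -> pcommute (Z_on D) S.
Proof.
case: S => s z x /= H; rewrite /pcommute /pmul /= H dotbC dotb0 /=.
by congr Pauli; rewrite ?addbF //; apply/ffunP => t; rewrite !ffunE addbC.
Qed.

End PauliAlgebra.

Definition even_pt (p : ipt) : Prop := modeq 2 (p.1.1 + p.1.2 + p.2) 0.

Definition in_box (Mx My Mz : int) (g p : ipt) : Prop :=
  [/\ modeq Mx p.1.1 g.1.1, modeq My p.1.2 g.1.2 & modeq Mz p.2 g.2].

Section Sites.
Variables ax ay az : nat.
Local Notation site := (site ax ay az).
Local Notation pos q := (ptA (val q)).

Lemma site_atE (p : ipt) (q : site) :
  site_at p q <-> in_box (2 * ax)%N (2 * ay)%N (2 * az)%N (pos q) p.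
Proof.
rewrite /site_at /at_pt /in_box /ptA; case: (val q) => [[x y] z] /=.
have E k w (n : 'I_(2 * k)) : (w %% (2 * k)%N)%Z = n <-> modeq (2 * k)%N w n.
  by apply: modzP; have := ltn_ord n; lia.
by split=> -[h1 h2 h3]; split; apply/E.
Qed.

Lemma site_uniq (p : ipt) (q q' : site) : site_at p q -> site_at p q' -> q = q'.
Proof.
rewrite /site_at /at_pt => -[h1 h2 h3] [h1' h2' h3']; apply: val_inj.
move: h1 h2 h3 h1' h2' h3'; case: (val q) => [[x y] z]; case: (val q') => [[x' y'] z'] /=.
by move=> -> -> -> [e1] [e2] [e3]; congr (_, _, _); apply: val_inj.
Qed.

Lemma site_even (q : site) : even_pt (pos q).
Proof. by have /modeq2_nat := valP q; rewrite /even_pt /= !PoszD. Qed.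

Lemma site_ex (p : ipt) : (0 < ax)%N -> (0 < ay)%N -> (0 < az)%N ->
  even_pt p -> exists q : site, site_at p q.
Proof.
move=> ax_gt0 ay_gt0 az_gt0 [e He].
have ord_of k w : (0 < k)%N -> exists2 n : 'I_(2 * k), (n : nat)%:Z = (w %% (2 * k)%N)%Z
                                  & modeq (2 * k)%N w n.
  move=> k0; have k2 : (0 < 2 * k)%N by lia.
  have [r rk Hr] := residue_exists w k2.
  by exists (Ordinal rk) => //=; apply/esym/modzP => //; lia.
have [nx rx [kx Hx]] := ord_of ax p.1.1 ax_gt0.
have [ny ry [ky Hy]] := ord_of ay p.1.2 ay_gt0.
have [nz rz [kz Hz]] := ord_of az p.2 az_gt0.
have Ha : inD ((nx, ny, nz) : Alat ax ay az).
  apply/modeq2_nat; exists (e - kx * ax%:Z - ky * ay%:Z - kz * az%:Z); rewrite /= !PoszD; lia.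
exists (exist (fun a : Alat ax ay az => is_true (inD a)) _ Ha).
by split; rewrite /= -?rx -?ry -?rz.
Qed.

Definition occupied (D : site -> Prop) (p : ipt) : Prop :=
  exists t, site_at p t /\ D t.

Lemma occupied_box (Mx My Mz : nat) (g : ipt) (D : site -> Prop) :
  (0 < ax)%N -> (0 < ay)%N -> (0 < az)%N ->
  (Mx %| 2 * ax)%N -> (My %| 2 * ay)%N -> (Mz %| 2 * az)%N ->
  (forall t, D t <-> in_box Mx My Mz g (pos t)) ->
  forall p, occupied D p <-> even_pt p /\ in_box Mx My Mz g p.
Proof.
move=> ax_gt0 ay_gt0 az_gt0 dx dy dz HD p; split.
- case=> t [/site_atE [h1 h2 h3] /HD [k1 k2 k3]]; split.
  + have [c1 e1] := modeq_dvd (dvdn_mulr ax (dvdnn 2)) h1.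
    have [c2 e2] := modeq_dvd (dvdn_mulr ay (dvdnn 2)) h2.
    have [c3 e3] := modeq_dvd (dvdn_mulr az (dvdnn 2)) h3.
    by case: (site_even t) => k Hk; exists (k + c1 + c2 + c3); lia.
  + by split; apply: modeq_trans; [exact: modeq_dvd h1 | exact: k1 | exact: modeq_dvd h2
                                   | exact: k2 | exact: modeq_dvd h3 | exact: k3].
- case=> /(site_ex ax_gt0 ay_gt0 az_gt0) [t Ht] [k1 k2 k3].
  exists t; split => //; apply/HD.
  case/site_atE: Ht => h1 h2 h3.
  by split; apply: modeq_trans (modeq_sym (modeq_dvd _ _)) _; eassumption.
Qed.

End Sites.

Section HalfPlanes.
Variables ax ay az : nat.
Local Notation site := (site ax ay az).
Local Notation pos q := (ptA (val q)).

Lemma Dx_halfE (g : ipt) (q : site) : Dx_half g q <-> in_box (2 * ax)%N 2%N 2%N g (pos q).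
Proof.
split.
- case=> l [l' /site_atE [[k1 h1] [k2 h2] [k3 h3]]] /=; rewrite /= in h1 h2 h3.
  by split; [exists (- k1) | exists (- k2 * ay%:Z + l') | exists (- k3 * az%:Z + l)];
     rewrite /=; lia.
- case=> -[k1 h1] [k2 h2] [k3 h3]; exists k3, k2; apply/site_atE.
  by split; [exists (- k1) | exists 0 | exists 0]; rewrite /= in h1 h2 h3 *; lia.
Qed.

Lemma Dz_halfE (g : ipt) (q : site) : Dz_half g q <-> in_box 2%N 2%N (2 * az)%N g (pos q).
Proof.
split.
- case=> l [l' /site_atE [[k1 h1] [k2 h2] [k3 h3]]] /=; rewrite /= in h1 h2 h3.
  by split; [exists (- k1 * ax%:Z + l) | exists (- k2 * ay%:Z + l') | exists (- k3)];
     rewrite /=; lia.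
- case=> -[k1 h1] [k2 h2] [k3 h3]; exists k1, k2; apply/site_atE.
  by split; [exists 0 | exists 0 | exists (- k3)]; rewrite /= in h1 h2 h3 *; lia.
Qed.

Definition ind (p : ipt) : {ffun site -> bool} := [ffun t => `[< site_at p t >]].

Lemma dotb_ind (D : site -> Prop) (p : ipt) :
  dotb [ffun t => `[< D t >]] (ind p) = `[< occupied D p >].
Proof.
rewrite /dotb /ind; case: (asboolP (occupied D p)) => [[t0 [h0 d0]] | hn].
  rewrite (_ : [set t | _] = [set t0]) ?cards1 //.
  apply/setP => t; rewrite !inE !ffunE; apply/idP/eqP => [/andP [_ /asboolP At] | ->].
    exact: site_uniq At h0.
  by rewrite (asboolT d0) (asboolT h0).
rewrite (_ : [set t | _] = set0) ?cards0 //.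
apply/setP => t; rewrite !inE !ffunE; apply/negbTE/negP => /andP [/asboolP Dt /asboolP At].
by apply: hn; exists t.
Qed.

Lemma pz_Sgen (s : Alat ax ay az) :
  pz (Sgen s) = [ffun t => ind (padd (ptA s) ey) t (+) ([ffun t => ind (padd (ptA s) emy) t (+)
      ([ffun t => ind (padd (ptA s) ez) t (+) ind (padd (ptA s) emz) t]) t]) t].
Proof. by apply/ffunP => t; rewrite /Sgen /pprod /= !ffunE /= ?addFb ?addbF. Qed.

Lemma px_Sgen (s : Alat ax ay az) :
  px (Sgen s) = [ffun t => ind (padd (ptA s) ex) t (+) ([ffun t => ind (padd (ptA s) emx) t (+)
      ([ffun t => ind (padd (ptA s) ey) t (+) ind (padd (ptA s) emy) t]) t]) t].
Proof. by apply/ffunP => t; rewrite /Sgen /pprod /= !ffunE /= ?addFb ?addbF. Qed.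

Section Commutation.
Hypotheses (ax_gt0 : (0 < ax)%N) (ay_gt0 : (0 < ay)%N) (az_gt0 : (0 < az)%N).

Lemma occupied_congr (Mx My Mz : nat) (g : ipt) (D : site -> Prop) (p p' : ipt) :
  (Mx %| 2 * ax)%N -> (My %| 2 * ay)%N -> (Mz %| 2 * az)%N ->
  (forall t, D t <-> in_box Mx My Mz g (pos t)) ->
  in_box Mx My Mz p p' -> modeq 2 (p'.1.1 + p'.1.2 + p'.2) (p.1.1 + p.1.2 + p.2) ->
  occupied D p' <-> occupied D p.
Proof.
move=> dx dy dz HD [e1 e2 e3] e.
rewrite !(occupied_box ax_gt0 ay_gt0 az_gt0 dx dy dz HD) /even_pt /in_box.
split=> -[h [h1 h2 h3]]; split; try split.
all: by [ apply: modeq_trans e _ | apply: modeq_trans (modeq_sym e) _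
        | apply: modeq_trans e1 _ | apply: modeq_trans (modeq_sym e1) _
        | apply: modeq_trans e2 _ | apply: modeq_trans (modeq_sym e2) _
        | apply: modeq_trans e3 _ | apply: modeq_trans (modeq_sym e3) _ ].
Qed.

(* Half-plane X-strings commute with the stabilizers: the Z-support of S_s
   meets D_x^g in the pairs {s + e_y, s - e_y} and {s + e_z, s - e_z}, whose
   points are congruent modulo (2 ax, 2, 2). *)
Lemma X_half_commute (g : ipt) (s : Alat ax ay az) : pcommute (X_on (Dx_half g)) (Sgen s).
Proof.
have cong := occupied_congr (dvdnn _) (dvdn_mulr ay (dvdnn 2)) (dvdn_mulr az (dvdnn 2))
               (@Dx_halfE g).
apply: X_on_commute; rewrite pz_Sgen !dotbD !dotb_ind.
rewrite (asbool_equiv_eq (cong (padd (ptA s) ey) (padd (ptA s) emy) _ _)); last 2 first.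
- by split; [exists 0 | exists (-1) | exists 0]; rewrite /=; lia.
- by exists (-1); rewrite /=; lia.
rewrite (asbool_equiv_eq (cong (padd (ptA s) ez) (padd (ptA s) emz) _ _)); last 2 first.
- by split; [exists 0 | exists 0 | exists (-1)]; rewrite /=; lia.
- by exists (-1); rewrite /=; lia.
by rewrite !addbA addbb addFb addbb.
Qed.

(* Dually, the X-support of S_s meets D_z^g in the pairs {s +- e_x} and
   {s +- e_y}, congruent modulo (2, 2, 2 az). *)
Lemma Z_half_commute (g : ipt) (s : Alat ax ay az) : pcommute (Z_on (Dz_half g)) (Sgen s).
Proof.
have cong := occupied_congr (dvdn_mulr ax (dvdnn 2)) (dvdn_mulr ay (dvdnn 2)) (dvdnn _)
               (@Dz_halfE g).
apply: Z_on_commute; rewrite dotbC px_Sgen !dotbD !dotb_ind.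
rewrite (asbool_equiv_eq (cong (padd (ptA s) ex) (padd (ptA s) emx) _ _)); last 2 first.
- by split; [exists (-1) | exists 0 | exists 0]; rewrite /=; lia.
- by exists (-1); rewrite /=; lia.
rewrite (asbool_equiv_eq (cong (padd (ptA s) ey) (padd (ptA s) emy) _ _)); last 2 first.
- by split; [exists 0 | exists (-1) | exists 0]; rewrite /=; lia.
- by exists (-1); rewrite /=; lia.
by rewrite !addbA addbb addFb addbb.
Qed.

End Commutation.

End HalfPlanes.

Lemma sign_pm1 (n : nat) : ((-1) ^+ n : int) = 1 \/ ((-1) ^+ n : int) = -1.
Proof. by rewrite -signr_odd; case: (odd n); [right | left]. Qed.

Lemma gpt_even (i : nat) : even_pt (gpt i).
Proof. by case: i => [|[|[|i]]]; [exists 0 | exists 1 | exists 1 | exists 1]. Qed.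

Section Strips.
Variables ax ay az : nat.
Local Notation site := (site ax ay az).
Local Notation pos q := (ptA (val q)).
Local Notation a := (alph ax ay az).
Local Notation bx := (betax ax ay az).
Local Notation by_ := (betay ax ay az).
Local Notation bz := (betaz ax ay az).

Lemma alph_gt0 : (0 < ax)%N -> (0 < a)%N.
Proof. by rewrite /alph gcdn_gt0 => ->. Qed.

Lemma alph_factor : [/\ ax = (a * bx)%N, ay = (a * by_)%N & az = (a * bz)%N].
Proof.
rewrite /betax /betay /betaz /alph; split; rewrite mulnC divnK //.
- exact: dvdn_gcdl.
- exact: dvdn_trans (dvdn_gcdr _ _) (dvdn_gcdl _ _).
- exact: dvdn_trans (dvdn_gcdr _ _) (dvdn_gcdr _ _).
Qed.

Lemma DxLE (i j : nat) (q : site) :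
  DxL i j q <-> modeq (2 * ax)%N (pos q).1.1 (gpt i).1.1 /\
    strip_cond a by_ bz (mu i) ((pos q).1.2 - (gpt i).1.2) ((pos q).2 - (gpt i).2) j.
Proof.
have [_ Ey Ez] := alph_factor; rewrite /DxL /strip_cond.
have {}Ey : (2 * ay)%N%:Z = (2 * (a * by_))%N by rewrite -Ey.
have {}Ez : (2 * az)%N%:Z = (2 * (a * bz))%N by rewrite -Ez.
split.
- case=> l1 [l2 [l [l' [h1 h2 h3 h4 /site_atE [[kx hx] [ky hy] [kz hz]]]]]].
  rewrite /= Ey Ez in hx hy hz; split; first by exists (- kx); rewrite /=; lia.
  by exists l1, l2, l, l'; split => //; split; [exists (- ky) | exists (- kz)]; rewrite /=; lia.
- case=> -[kx hx] [l1 [l2 [l [l' [h1 h2 h3 h4 [[ky hy] [kz hz]]]]]]].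
  exists l1, l2, l, l'; split => //; apply/site_atE; rewrite /= Ey Ez.
  by split; [exists (- kx) | exists (- ky) | exists (- kz)]; rewrite /= in hx hy hz *; lia.
Qed.

Lemma DzLE (i j : nat) (q : site) :
  DzL i j q <-> modeq (2 * az)%N (pos q).2 (gpt i).2 /\
    strip_cond a by_ bx (nu i) ((pos q).1.2 - (gpt i).1.2) ((pos q).1.1 - (gpt i).1.1) j.
Proof.
have [Ex Ey _] := alph_factor; rewrite /DzL /strip_cond.
have {}Ex : (2 * ax)%N%:Z = (2 * (a * bx))%N by rewrite -Ex.
have {}Ey : (2 * ay)%N%:Z = (2 * (a * by_))%N by rewrite -Ey.
split.
- case=> l1 [l2 [l [l' [h1 h2 h3 h4 /site_atE [[kx hx] [ky hy] [kz hz]]]]]].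
  rewrite /= Ex Ey in hx hy hz; split; first by exists (- kz); rewrite /=; lia.
  by exists l1, l2, l, l'; split => //; split; [exists (- ky) | exists (- kx)]; rewrite /=; lia.
- case=> -[kz hz] [l1 [l2 [l [l' [h1 h2 h3 h4 [[ky hy] [kx hx]]]]]]].
  exists l1, l2, l, l'; split => //; apply/site_atE; rewrite /= Ex Ey.
  by split; [exists (- kx) | exists (- ky) | exists (- kz)]; rewrite /= in hx hy hz *; lia.
Qed.

End Strips.

Section Product.
Variables ax ay az : nat.
Hypotheses (ax_gt0 : (0 < ax)%N) (ay_gt0 : (0 < ay)%N) (az_gt0 : (0 < az)%N).
Local Notation site := (site ax ay az).
Local Notation pos q := (ptA (val q)).
Local Notation a := (alph ax ay az).

Lemma Dx_half_parity (i : nat) (t : site) :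
  Dx_half (gpt i) t <-> odd (count (fun j => `[< DxL i j t >]) (iota 0 a)).
Proof.
have a0 := alph_gt0 ay az ax_gt0.
have [_ Ey Ez] := alph_factor ax ay az.
have by0 : (0 < betay ax ay az)%N by move: Ey; lia.
have bz0 : (0 < betaz ax ay az)%N by move: Ez; lia.
case: (asboolP (modeq (2 * ax)%N (pos t).1.1 (gpt i).1.1)) => Hx; last first.
  rewrite (@eq_in_count _ _ pred0) ?count_pred0; last first.
    by move=> j _; apply/asboolF => /DxLE [].
  by split=> // /Dx_halfE [/Hx].
set Y := (pos t).1.2 - (gpt i).1.2; set W := (pos t).2 - (gpt i).2.
rewrite (@eq_in_count _ _
          (fun j => `[< strip_cond a (betay ax ay az) (betaz ax ay az) (mu i) Y W j >]));
  last by move=> j _; apply: asbool_equiv_eq; rewrite DxLE //; split=> [[]|].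
rewrite odd_count_strip //; last 2 first.
- exact: sign_pm1.
- have [k Hk] := site_even t; have [k' Hk'] := gpt_even i; have [c Hc] := Hx.
  by exists (k - k' - c * ax%:Z); rewrite /Y /W; lia.
rewrite Dx_halfE /in_box /Y /W.
split=> [[_ [k1 h1] [k2 h2]] | [[k1 h1] [k2 h2]]]; last split => //.
- by split; [exists k1 | exists k2]; lia.
- by exists k1; lia.
- by exists k2; lia.
Qed.

Lemma Dz_half_parity (i : nat) (t : site) :
  Dz_half (gpt i) t <-> odd (count (fun j => `[< DzL i j t >]) (iota 0 a)).
Proof.
have a0 := alph_gt0 ay az ax_gt0.
have [Ex Ey _] := alph_factor ax ay az.
have by0 : (0 < betay ax ay az)%N by move: Ey; lia.
have bx0 : (0 < betax ax ay az)%N by move: Ex; lia.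
case: (asboolP (modeq (2 * az)%N (pos t).2 (gpt i).2)) => Hz; last first.
  rewrite (@eq_in_count _ _ pred0) ?count_pred0; last first.
    by move=> j _; apply/asboolF => /DzLE [].
  by split=> // /Dz_halfE [_ _ /Hz].
set Y := (pos t).1.2 - (gpt i).1.2; set W := (pos t).1.1 - (gpt i).1.1.
rewrite (@eq_in_count _ _
          (fun j => `[< strip_cond a (betay ax ay az) (betax ax ay az) (nu i) Y W j >]));
  last by move=> j _; apply: asbool_equiv_eq; rewrite DzLE //; split=> [[]|].
rewrite odd_count_strip //; last 2 first.
- exact: sign_pm1.
- have [k Hk] := site_even t; have [k' Hk'] := gpt_even i; have [c Hc] := Hz.
  by exists (k - k' - c * az%:Z); rewrite /Y /W; lia.
rewrite Dz_halfE /in_box /Y /W.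
split=> [[[k1 h1] [k2 h2] _] | [[k2 h2] [k1 h1]]]; last split => //.
- by split; [exists k2 | exists k1]; lia.
- by exists k1; lia.
- by exists k2; lia.
Qed.

Lemma XL_product (i : nat) :
  pprod [seq XL ax ay az i j | j <- iota 0 a] = X_on (Dx_half (gpt i)).
Proof.
rewrite (pprod_X_on (fun j => @DxL ax ay az i j)); apply: X_on_ext => t.
exact: iff_sym (Dx_half_parity i t).
Qed.

Lemma ZL_product (i : nat) :
  pprod [seq ZL ax ay az i j | j <- iota 0 a] = Z_on (Dz_half (gpt i)).
Proof.
rewrite (pprod_Z_on (fun j => @DzL ax ay az i j)); apply: Z_on_ext => t.
exact: iff_sym (Dz_half_parity i t).
Qed.

End Product.

Unset Implicit Arguments.

Theorem corollary3 (ax ay az : nat) :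
  (1 < ax)%N -> (1 < ay)%N -> (1 < az)%N ->
  odd (betay ax ay az) ->
  forall i : nat, (i < 4)%N ->
    (forall s : Alat ax ay az, ~~ inD s ->
       pcommute (X_on (@Dx_half ax ay az (gpt i))) (Sgen s)) /\
    (forall s : Alat ax ay az, ~~ inD s ->
       pcommute (Z_on (@Dz_half ax ay az (gpt i))) (Sgen s)) /\
    (exists St, in_stab St /\
       X_on (@Dx_half ax ay az (gpt i)) =
       pmul (pprod [seq XL ax ay az i j | j <- iota 0 (alph ax ay az)]) St) /\
    (exists St, in_stab St /\
       Z_on (@Dz_half ax ay az (gpt i)) =
       pmul (pprod [seq ZL ax ay az i j | j <- iota 0 (alph ax ay az)]) St).
Proof.
move=> ax_gt1 ay_gt1 az_gt1 _ i _.
have ax_gt0 : (0 < ax)%N by exact: ltnW.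
have ay_gt0 : (0 < ay)%N by exact: ltnW.
have az_gt0 : (0 < az)%N by exact: ltnW.
split; first by move=> s _; exact: X_half_commute.
split; first by move=> s _; exact: Z_half_commute.
split; exists (pid _); split; rewrite ?pmul_pid; try exact: stab_id.
- by rewrite XL_product.
- by rewrite ZL_product.
Qed.
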